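(* Let $A$ be a real $m\times m$ matrix, $f,f_\delta\in\mathbb{R}^m$ with $\|f_\delta-f\|\le\delta$, $q\in(0,1)$. Define $u_1=u_1^\delta=0$, $u_{n+1}=q^nT_{q^n}^{-1}u_n+T_{q^n}^{-1}A^*f$ and $u_{n+1}^\delta=q^nT_{q^n}^{-1}u_n^\delta+T_{q^n}^{-1}A^*f_\delta$ for $n\ge1$. Then for all $n\ge1$, $$\|u_n^\delta-u_n\|\le\frac{\sqrt q}{1-\sqrt q}\,\frac{\delta}{2\sqrt{q^n}}.$$
   Context: $A^*$ is the transpose of $A$, $T:=A^*A$, $T_a:=T+aI$ for $a>0$; $\|\cdot\|$ is the Euclidean norm. *)

(* the statement is purely algebraic (matrix inverse, sums,
   square roots), so it is stated over an arbitrary real closed field R. *)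
From HB Require Import structures.
From mathcomp Require Import all_boot all_order all_algebra.
Set Implicit Arguments. Unset Strict Implicit. Unset Printing Implicit Defensive.
Import Order.TTheory GRing.Theory Num.Theory.
Local Open Scope ring_scope.

Definition enorm (R : rcfType) (m : nat) (v : 'cV[R]_m) : R :=
  Num.sqrt (\sum_(i < m) v i 0 ^+ 2).

Definition Tmat (R : rcfType) (m : nat) (A : 'M[R]_m) : 'M[R]_m := A^T *m A.
Definition Ta (R : rcfType) (m : nat) (A : 'M[R]_m) (a : R) : 'M[R]_m :=
  Tmat A + a%:M.

(* useq_aux A q g k = u_{k+1}:
   u_1 = 0,  u_{n+1} = q^n T_{q^n}^{-1} u_n + T_{q^n}^{-1} A^* g  (n >= 1) *)
Fixpoint useq_aux (R : rcfType) (m : nat) (A : 'M[R]_m) (q : R)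
    (g : 'cV[R]_m) (k : nat) : 'cV[R]_m :=
  match k with
  | 0 => 0
  | k'.+1 =>
      q ^+ k *: (invmx (Ta A (q ^+ k)) *m useq_aux A q g k')
      + invmx (Ta A (q ^+ k)) *m (A^T *m g)
  end.

Definition useq (R : rcfType) (m : nat) (A : 'M[R]_m) (q : R)
    (g : 'cV[R]_m) (n : nat) : 'cV[R]_m := useq_aux A q g n.-1.

(* The error e_n = u_n^delta - u_n satisfies the same recursion as u_n, with
   data f_delta - f.  For a > 0 the matrix T_a dominates a I, so
   |a T_a^-1 x| <= |x|; and y = T_a^-1 A^* g solves a|y|^2 + |Ay|^2 = <Ay, g>,
   whence |y| <= |g| / (2 sqrt a).  With a = q^n the triangle inequality gives
   |e_{n+1}| <= |e_n| + delta / (2 sqrt q^n), and summing this geometric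
   series in 1 / sqrt q yields the bound. *)

From HB Require Import structures.
From mathcomp Require Import all_boot all_order all_algebra ring lra.
Import Order.TTheory GRing.Theory Num.Theory.
Local Open Scope ring_scope.

Section InnerProduct.
Context {R : rcfType} {m : nat}.
Implicit Types x y z : 'cV[R]_m.

Definition dot x y : R := \sum_(i < m) x i 0 * y i 0.

Lemma dotC x y : dot x y = dot y x.
Proof. by apply: eq_bigr => i _; rewrite mulrC. Qed.

Lemma dotDl x y z : dot (x + y) z = dot x z + dot y z.
Proof. by rewrite /dot -big_split; apply: eq_bigr => i _; rewrite !mxE mulrDl. Qed.

Lemma dotDr x y z : dot x (y + z) = dot x y + dot x z.
Proof. by rewrite dotC dotDl !(dotC x). Qed.

Lemma dotZl a x y : dot (a *: x) y = a * dot x y.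
Proof. by rewrite /dot mulr_sumr; apply: eq_bigr => i _; rewrite !mxE mulrA. Qed.

Lemma dotZr a x y : dot x (a *: y) = a * dot x y.
Proof. by rewrite dotC dotZl dotC. Qed.

Lemma dotNl x y : dot (- x) y = - dot x y.
Proof. by rewrite -scaleN1r dotZl mulN1r. Qed.

Lemma dotNr x y : dot x (- y) = - dot x y.
Proof. by rewrite dotC dotNl dotC. Qed.

Lemma dot0l y : dot 0 y = 0.
Proof. by rewrite -(scale0r 0) dotZl mul0r. Qed.

Lemma dot_ge0 x : 0 <= dot x x.
Proof. by apply: sumr_ge0 => i _; rewrite -expr2 sqr_ge0. Qed.

Lemma dot_eq0 x : dot x x = 0 -> x = 0.
Proof.
move=> x0; apply/matrixP => i j; rewrite (ord1 j) mxE.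
have xk_sqr_ge0 (k : 'I_m) : true -> 0 <= x k 0 * x k 0 by rewrite -expr2 sqr_ge0.
by apply/eqP; rewrite -[_ == 0]orbb -mulf_eq0 (psumr_eq0P xk_sqr_ge0 x0).
Qed.

Lemma dot_mulmx (M : 'M[R]_m) x y : dot x (M *m y) = dot (M^T *m x) y.
Proof.
rewrite /dot; under eq_bigr => i _ do rewrite mxE mulr_sumr.
rewrite exchange_big; apply: eq_bigr => j _; rewrite mxE mulr_suml.
by apply: eq_bigr => i _; rewrite mxE mulrCA mulrA.
Qed.

Lemma dot_le_sum x y : 2 * dot x y <= dot x x + dot y y.
Proof.
have := dot_ge0 (x - y).
by rewrite dotDl !dotDr !dotNl !dotNr opprK (dotC y x); lra.
Qed.

Lemma enormE x : enorm x = Num.sqrt (dot x x).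
Proof. by congr Num.sqrt; apply: eq_bigr => i _; rewrite expr2. Qed.

Lemma enorm_ge0 x : 0 <= enorm x.
Proof. exact: sqrtr_ge0. Qed.

Lemma enorm_sqr x : enorm x ^+ 2 = dot x x.
Proof. by rewrite enormE sqr_sqrtr // dot_ge0. Qed.

Lemma enorm0 : enorm (0 : 'cV[R]_m) = 0.
Proof. by rewrite enormE dot0l sqrtr0. Qed.

Lemma enorm_eq0 x : enorm x = 0 -> x = 0.
Proof. by move=> x0; apply: dot_eq0; rewrite -enorm_sqr x0 expr0n. Qed.

(* Cauchy-Schwarz: apply [dot_le_sum] to [|y| x] and [|x| y]. *)
Lemma dot_le_enorm x y : dot x y <= enorm x * enorm y.
Proof.
have [/enorm_eq0 ->|nx] := eqVneq (enorm x) 0; first by rewrite dot0l enorm0 mul0r.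
have [/enorm_eq0 ->|ny] := eqVneq (enorm y) 0.
  by rewrite dotC dot0l enorm0 mulr0.
have nxy : 0 < 2 * enorm x * enorm y by rewrite !mulr_gt0 // lt0r ?nx ?ny enorm_ge0.
rewrite -(ler_pM2l nxy).
have := dot_le_sum (enorm y *: x) (enorm x *: y).
rewrite !dotZl !dotZr -!enorm_sqr; lra.
Qed.

Lemma enormD x y : enorm (x + y) <= enorm x + enorm y.
Proof.
rewrite -[_ + enorm y]ger0_norm ?addr_ge0 ?enorm_ge0 // -sqrtr_sqr enormE.
rewrite ler_sqrt ?sqr_ge0 // sqrrD !enorm_sqr dotDl !dotDr (dotC y x).
have := dot_le_enorm x y; lra.
Qed.

End InnerProduct.

Section ShiftedNormalMatrix.
Context {R : rcfType} {m : nat}.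
Variables (A : 'M[R]_m) (a : R).
Hypothesis a_gt0 : 0 < a.

Lemma Ta_mulmx (y : 'cV[R]_m) : Ta A a *m y = Tmat A *m y + a *: y.
Proof. by rewrite mulmxDl mul_scalar_mx. Qed.

Lemma tr_Ta : (Ta A a)^T = Ta A a.
Proof. by rewrite linearD /= trmx_mul trmxK tr_scalar_mx. Qed.

Lemma dot_Tmat (y : 'cV[R]_m) : dot y (Tmat A *m y) = dot (A *m y) (A *m y).
Proof. by rewrite -mulmxA dot_mulmx trmxK. Qed.

Lemma dot_Ta (y : 'cV[R]_m) :
  dot y (Ta A a *m y) = dot (A *m y) (A *m y) + a * dot y y.
Proof. by rewrite Ta_mulmx dotDr dotZr dot_Tmat. Qed.

Lemma dot_Ta_ge (y : 'cV[R]_m) :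
  a ^+ 2 * dot y y <= dot (Ta A a *m y) (Ta A a *m y).
Proof.
rewrite Ta_mulmx dotDl !dotDr !dotZl !dotZr (dotC _ y) dot_Tmat.
have := dot_ge0 (Tmat A *m y); have := mulr_ge0 (ltW a_gt0) (dot_ge0 (A *m y)).
lra.
Qed.

Lemma Ta_inj (y : 'cV[R]_m) : Ta A a *m y = 0 -> y = 0.
Proof.
move=> Ty0; apply: dot_eq0; apply/eqP; rewrite eq_le dot_ge0 andbT.
by have := dot_Ta_ge y; rewrite Ty0 dot0l pmulr_rle0 // exprn_gt0.
Qed.

Lemma Ta_unit : Ta A a \in unitmx.
Proof.
rewrite unitmxE unitfE; apply/det0P => -[v /eqP v_neq0 vTa0]; apply: v_neq0.
have : Ta A a *m v^T = 0 by rewrite -tr_Ta -trmx_mul vTa0 trmx0.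
by move/Ta_inj/(congr1 trmx); rewrite trmxK trmx0.
Qed.

Lemma enorm_scale_invTa (x : 'cV[R]_m) :
  enorm (a *: (invmx (Ta A a) *m x)) <= enorm x.
Proof.
have Ty : Ta A a *m (invmx (Ta A a) *m x) = x by rewrite mulKVmx ?Ta_unit.
rewrite !enormE ler_sqrt ?dot_ge0 // dotZl dotZr mulrA -expr2.
by rewrite -[in X in _ <= X]Ty; apply: dot_Ta_ge.
Qed.

Lemma enorm_invTa_tr (g : 'cV[R]_m) :
  enorm (invmx (Ta A a) *m (A^T *m g)) <= enorm g / (2 * Num.sqrt a).
Proof.
set y := invmx (Ta A a) *m (A^T *m g).
have Ty : Ta A a *m y = A^T *m g by rewrite mulKVmx ?Ta_unit.
(* [4a|y|^2 = 4 <Ay, g - Ay> <= |g|^2] by completing the square. *)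
have dot_yy : 4 * a * dot y y <= dot g g.
  have := dot_Ta y; rewrite Ty dot_mulmx trmxK.
  have := dot_le_sum g (2 *: (A *m y)); rewrite dotZl !dotZr (dotC g); lra.
have sqrt_a_gt0 : 0 < Num.sqrt a by rewrite sqrtr_gt0.
rewrite ler_pdivlMr ?mulr_gt0 //.
rewrite -(@ler_pXn2r _ 2) ?nnegrE ?mulr_ge0 ?enorm_ge0 ?sqrtr_ge0 //.
by rewrite !exprMn !enorm_sqr sqr_sqrtr ?(ltW a_gt0) //; lra.
Qed.

End ShiftedNormalMatrix.

Lemma le_inv_geometric_bound {R : realFieldType} {s c : R} (e : nat -> R) :
  0 < s -> s < 1 -> 0 <= c -> e 0%N <= 0 ->
  (forall k, e k.+1 <= e k + c / s ^+ k.+1) ->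
  forall k, e k <= c / ((1 - s) * s ^+ k).
Proof.
move=> s_gt0 s_lt1 c_ge0 e0_le0 e_succ.
have one_s_gt0 : 0 < 1 - s by rewrite subr_gt0.
(* [c (1 - s^k) / ((1 - s) s^k)] is the sum of [c / s^j] over [1 <= j <= k]. *)
have partial_sum k : (1 - s) * s ^+ k * e k <= c * (1 - s ^+ k).
  elim: k => [|k IH]; first by rewrite expr0 subrr mulr0 mulr1 pmulr_rle0.
  have t_gt0 : 0 < s ^+ k := exprn_gt0 k s_gt0.
  have P_gt0 : 0 < (1 - s) * (s * s ^+ k) by rewrite !mulr_gt0.
  have := e_succ k; rewrite exprS -(ler_pM2l P_gt0) mulrDr.
  have -> : (1 - s) * (s * s ^+ k) * (c / (s * s ^+ k)) = (1 - s) * c.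
    by field; rewrite !gt_eqF.
  have := ler_wpM2l (ltW s_gt0) IH; lra.
move=> k; have t_gt0 : 0 < s ^+ k := exprn_gt0 k s_gt0.
rewrite ler_pdivlMr ?mulr_gt0 // mulrC.
have := partial_sum k; have := mulr_ge0 c_ge0 (ltW t_gt0); lra.
Qed.

Lemma sqrtrX {R : rcfType} (a : R) n : 0 <= a -> Num.sqrt (a ^+ n) = Num.sqrt a ^+ n.
Proof.
move=> a_ge0; elim: n => [|n IH]; first by rewrite !expr0 sqrtr1.
by rewrite !exprS sqrtrM // IH.
Qed.

Section Iteration.
Context {R : rcfType} {m : nat}.
Variables (A : 'M[R]_m) (q : R).

Lemma useq_auxB (g h : 'cV[R]_m) k :
  useq_aux A q (g - h) k = useq_aux A q g k - useq_aux A q h k.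
Proof.
elim: k => [|k IH] /=; first by rewrite subr0.
by rewrite IH !mulmxBr scalerBr opprD addrACA.
Qed.

Lemma enorm_useq_aux_succ (g : 'cV[R]_m) k : 0 < q ->
  enorm (useq_aux A q g k.+1)
    <= enorm (useq_aux A q g k) + enorm g / (2 * Num.sqrt q ^+ k.+1).
Proof.
move=> q_gt0; have qk_gt0 : 0 < q ^+ k.+1 := exprn_gt0 _ q_gt0.
rewrite [useq_aux _ _ _ k.+1]/= -(sqrtrX _ _ (ltW q_gt0)).
apply: le_trans (enormD _ _) _.
by apply: lerD; [apply: enorm_scale_invTa | apply: enorm_invTa_tr].
Qed.

End Iteration.

Theorem lemma3p2 (R : rcfType) (m : nat) (A : 'M[R]_m) (f fd : 'cV[R]_m)
    (delta q : R) :
  enorm (fd - f) <= delta -> 0 < q -> q < 1 ->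
  forall n : nat, (1 <= n)%N ->
    enorm (useq A q fd n - useq A q f n)
      <= Num.sqrt q / (1 - Num.sqrt q) * (delta / (2 * Num.sqrt (q ^+ n))).
Proof.
move=> fd_f q_gt0 q_lt1 [|k] // _.
have s_gt0 : 0 < Num.sqrt q by rewrite sqrtr_gt0.
have s_lt1 : Num.sqrt q < 1 by rewrite -sqrtr1 ltr_sqrt.
have delta_ge0 : 0 <= delta := le_trans (enorm_ge0 _) fd_f.
rewrite /useq /= -useq_auxB (sqrtrX _ _ (ltW q_gt0)).
set s := Num.sqrt q in s_gt0 s_lt1 *.
have -> : s / (1 - s) * (delta / (2 * s ^+ k.+1)) = delta / 2 / ((1 - s) * s ^+ k).
  by rewrite exprS; field; rewrite !gt_eqF ?exprn_gt0 ?subr_gt0.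
apply: (le_inv_geometric_bound (fun j => enorm (useq_aux A q (fd - f) j))) => //.
- by rewrite divr_ge0.
- by rewrite enorm0.
- move=> j; apply: le_trans (enorm_useq_aux_succ A q _ _ q_gt0) _.
  rewrite lerD2l invfM mulrA ler_wpM2r ?invr_ge0 ?exprn_ge0 ?(ltW s_gt0) //.
  by rewrite ler_pM2r ?invr_gt0.
Qed.
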